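(* Let $(\mathfrak{g},\langle\cdot,\cdot\rangle_{\mathfrak{g}})$ be an abelian quadratic Lie algebra (i.e. an abelian Lie algebra with a nondegenerate symmetric bilinear form) and let $A\in\mathfrak{so}(\mathfrak{g},\langle\cdot,\cdot\rangle_{\mathfrak{g}})$ be non-nilpotent. Let $\delta_A(\mathfrak{g})=\mathbb{R}e\oplus\mathfrak{g}\oplus\mathbb{R}\bar e$ be the double extension of $\mathfrak{g}$ by $A$, and let $(\mathfrak{a},\langle\cdot,\cdot\rangle_{\mathfrak{a}})$ be an abelian quadratic Lie algebra. Consider the product quadratic Lie algebra $\delta_A(\mathfrak{g})\oplus\mathfrak{a}$ (direct sum of Lie algebras, orthogonal direct sum of the forms). Then every derivation $D$ of $\delta_A(\mathfrak{g})\oplus\mathfrak{a}$ that is skew-symmetric with respect to the quadratic form satisfies $D(e)=0$. In particular, $\delta_A(\mathfrak{g})\oplus\mathfrak{a}$ admits no $k$-symplectic structure for any $k\ge1$.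
   Context: The double extension of a quadratic Lie algebra $(\mathfrak{g},[\cdot,\cdot]_{\mathfrak{g}},\langle\cdot,\cdot\rangle_{\mathfrak{g}})$ by a skew-symmetric endomorphism $A$ is the vector space $\delta_A(\mathfrak{g})=\mathbb{R}e\oplus\mathfrak{g}\oplus\mathbb{R}\bar e$ with nonvanishing brackets $[\bar e,u]=Au$ and $[u,v]=\langle Au,v\rangle_{\mathfrak{g}}\,e+[u,v]_{\mathfrak{g}}$ for $u,v\in\mathfrak{g}$ ($e$ central), and quadratic form $\langle xe+u+\bar x\bar e,\,xe+u+\bar x\bar e\rangle=2x\bar x+\langle u,u\rangle_{\mathfrak{g}}$. A quadratic Lie algebra is a real Lie algebra with a nondegenerate invariant symmetric bilinear form ($\langle[u,v],w\rangle+\langle[u,w],v\rangle=0$). A $k$-symplectic structure on a real Lie algebra $\mathfrak{k}$ of dimension $n(k+1)$ ($n,k\ge1$) is a pair consisting of a Lie subalgebra $\mathfrak{h}\subset\mathfrak{k}$ of dimension $nk$ and a family $(\theta_1,\dots,\theta_k)$ of skew-symmetric bilinear forms on $\mathfrak{k}$ such that: (i) $\bigcap_{i=1}^k\ker\theta_i=\{0\}$, where $\ker\theta_i=\{u:\theta_i(u,v)=0\ \forall v\}$; (ii) each $\theta_i$ is a 2-cocycle: $\theta_i([u,v],w)+\theta_i([v,w],u)+\theta_i([w,u],v)=0$ for all $u,v,w$; (iii) $\theta_i(u,v)=0$ for all $u,v\in\mathfrak{h}$ and all $i$. *)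

From mathcomp Require Import all_boot all_order all_algebra.
From mathcomp Require Import reals.
Set Implicit Arguments. Unset Strict Implicit. Unset Printing Implicit Defensive.
Import Order.TTheory GRing.Theory Num.Theory.
Local Open Scope ring_scope.

(* Vectors of g (resp. a) are row vectors 'rV[R]_n; the quadratic form is
   given by a Gram matrix B: <u,v> = u B v^T. Endomorphisms act on the right:
   A u := u *m A. *)
Definition bform (R : realType) (n : nat) (B : 'M[R]_n) (u v : 'rV[R]_n) : R :=
  (u *m B *m v^T) 0 0.

Definition quad_mx (R : realType) (n : nat) (B : 'M[R]_n) : Prop :=
  B^T = B /\ B \in unitmx.

Definition so_mx (R : realType) (n : nat) (B A : 'M[R]_n) : Prop :=
  forall u v : 'rV[R]_n, bform B (u *m A) v + bform B u (v *m A) = 0.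

(* Underlying space of delta_A(g) (+) a: elements (((x, u), xb), w) stand for
   x e + u + xb ebar + w. *)
Definition DEA (R : realType) (n m : nat) :=
  (R^o * 'rV[R]_n * R^o * 'rV[R]_m)%type.

Definition de_e (R : realType) (n m : nat) : DEA R n m := (1, 0, 0, 0).

Definition dbr (R : realType) (n m : nat) (B A : 'M[R]_n)
  (p q : DEA R n m) : DEA R n m :=
  (bform B (p.1.1.2 *m A) q.1.1.2,
   p.1.2 *: (q.1.1.2 *m A) - q.1.2 *: (p.1.1.2 *m A), 0, 0).

(* Symmetric bilinear form of delta_A(g) (+) a (polarization of
   2 x xb + <u,u>_g + <w,w>_a). *)
Definition dform (R : realType) (n m : nat) (B : 'M[R]_n) (Ba : 'M[R]_m)
  (p q : DEA R n m) : R :=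
  p.1.1.1 * q.1.2 + q.1.1.1 * p.1.2 + bform B p.1.1.2 q.1.1.2
  + bform Ba p.2 q.2.

Definition derivation (R : realType) (V : vectType R) (br : V -> V -> V)
  (D : V -> V) : Prop :=
  forall u v, D (br u v) = br (D u) v + br u (D v).

Definition skew_wrt (R : realType) (V : vectType R) (q : V -> V -> R)
  (D : V -> V) : Prop :=
  forall u v, q (D u) v + q u (D v) = 0.

Definition ksymplectic (R : realType) (V : vectType R) (br : V -> V -> V)
  (k : nat) : Prop :=
  (0 < k)%N /\
  exists N : nat, (0 < N)%N /\ \dim (fullv : {vspace V}) = (N * k.+1)%N /\
  exists h : {vspace V},
    (forall u v, u \in h -> v \in h -> br u v \in h) /\
    \dim h = (N * k)%N /\
    exists theta : 'I_k -> V -> V -> R,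
      (forall i a u v w, theta i (a *: u + v) w = a * theta i u w + theta i v w) /\
      (forall i a u v w, theta i w (a *: u + v) = a * theta i w u + theta i w v) /\
      (forall i u v, theta i u v = - theta i v u) /\
      (forall u, (forall i v, theta i u v = 0) -> u = 0) /\
      (forall i u v w,
         theta i (br u v) w + theta i (br v w) u + theta i (br w u) v = 0) /\
      (forall i u v, u \in h -> v \in h -> theta i u v = 0).

From mathcomp Require Import all_boot all_order all_algebra.
From mathcomp Require Import reals.
From mathcomp Require Import ring.
Set Implicit Arguments. Unset Strict Implicit. Unset Printing Implicit Defensive.
Import Order.TTheory GRing.Theory Num.Theory.
Local Open Scope ring_scope.

(* The heart of the proof is a fact about 2-cocycles (cocycle_e_vanish): if
   theta is a skew-symmetric bilinear 2-cocycle of L = delta_A(g) (+) a, with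
   g and a abelian and A in so(g) not nilpotent, then theta(e, _) = 0.
   Writing L = R e (+) g (+) R ebar (+) a, this is checked summand by summand
   with the cocycle identity on well chosen triples:
   - theta(e, e) = 0 by skew-symmetry;
   - theta(e, a) = 0 because the bracket [u, v] = <u A, v> e of g is nonzero;
   - theta(e, g) = 0 because the identity on g x g x g makes theta(e, w) A a
     rank-2 skew-type endomorphism, whose cube vanishes;
   - theta(e, ebar) = 0 because the identity on ebar x g x g yields an M with
     [M, A] = theta(e, ebar) A, and in characteristic 0 an eigenvector of
     [M, _] for a nonzero eigenvalue is nilpotent (by Cayley-Hamilton).  The
   theorem follows: <D e, _> = 0 gives D e = 0 by nondegeneracy, and for a
   k-symplectic structure e lies in the kernel of every theta_i. *)

(* A map phi : V -> R to the scalars is a linear form when it commutes with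
   the linear combination a u + v; this is the shape in which bilinearity is
   given for the cocycles theta_i of a k-symplectic structure. *)
Definition linear_form (R : pzRingType) (V : lmodType R) (phi : V -> R) :=
  forall a u v, phi (a *: u + v) = a * phi u + phi v.

Section LinearForm.
Variables (R : pzRingType) (V : lmodType R) (phi : V -> R).
Hypothesis phiL : linear_form phi.

Lemma linear_form0 : phi 0 = 0.
Proof. by have := phiL (-1) 0 0; rewrite scaler0 addr0 mulN1r addNr. Qed.

Lemma linear_formD u v : phi (u + v) = phi u + phi v.
Proof. by have := phiL 1 u v; rewrite scale1r mul1r. Qed.

Lemma linear_formZ a u : phi (a *: u) = a * phi u.
Proof. by have := phiL a u 0; rewrite !addr0 linear_form0 addr0. Qed.

Lemma linear_formN u : phi (- u) = - phi u.
Proof. by rewrite -scaleN1r linear_formZ mulN1r. Qed.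

Lemma linear_formB u v : phi (u - v) = phi u - phi v.
Proof. by rewrite linear_formD linear_formN. Qed.

End LinearForm.

Lemma linear_form_coord (R : pzRingType) n (phi : 'rV[R]_n -> R) :
  linear_form phi -> forall u, phi u = \sum_j u 0 j * phi (delta_mx 0 j).
Proof.
move=> phiL u; rewrite {1}(row_sum_delta u).
rewrite (big_morph phi (linear_formD phiL) (linear_form0 phiL)).
by apply: eq_bigr => j _; rewrite linear_formZ.
Qed.

Section BilinearForm.
Variables (R : realType) (n : nat).
Implicit Types (B X : 'M[R]_n) (u v : 'rV[R]_n).

Lemma bform_linl B v : linear_form (fun u => bform B u v).
Proof. by move=> a u w; rewrite /bform !mulmxDl -!scalemxAl !mxE. Qed.

Lemma bform_linr B u : linear_form (bform B u).
Proof.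
by move=> a v w; rewrite /bform linearD linearZ /= mulmxDr -scalemxAr !mxE.
Qed.

Lemma bform_sym B u v : B^T = B -> bform B u v = bform B v u.
Proof.
move=> BT; rewrite /bform.
have -> : u *m B *m v^T = (v *m B *m u^T)^T by rewrite !trmx_mul trmxK BT mulmxA.
by rewrite mxE.
Qed.

Lemma bform_delta X i j : bform X (delta_mx 0 i) (delta_mx 0 j) = X i j.
Proof. by rewrite /bform -rowE trmx_delta -colE !mxE. Qed.

Lemma bform_delta_r X u j : bform X u (delta_mx 0 j) = (u *m X) 0 j.
Proof. by rewrite /bform trmx_delta -colE !mxE. Qed.

Lemma bform_mulr X (A : 'M[R]_n) u v : bform X u (v *m A) = bform (X *m A^T) u v.
Proof. by rewrite /bform trmx_mul !mulmxA. Qed.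

Lemma bilinear_gram (b : 'rV[R]_n -> 'rV[R]_n -> R) :
  (forall v, linear_form (b ^~ v)) -> (forall u, linear_form (b u)) ->
  forall u v, b u v = bform (\matrix_(i, j) b (delta_mx 0 i) (delta_mx 0 j)) u v.
Proof.
move=> bL bR u v; rewrite (linear_form_coord (bR u)) /bform mxE.
apply: eq_bigr => k _; rewrite (linear_form_coord (bL _) u) !mxE mulrC.
by congr (_ * _); apply: eq_bigr => l _; rewrite !mxE.
Qed.

Lemma bform_nondeg B u : B \in unitmx -> (forall v, bform B u v = 0) -> u = 0.
Proof.
move=> Bu u0; have uB : u *m B = 0.
  by apply/matrixP => i j; rewrite (ord1 i) -bform_delta_r u0 mxE.
by rewrite -[u]mulmx1 -(mulmxV Bu) mulmxA uB mul0mx.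
Qed.

Lemma so_mxE B (A : 'M[R]_n) : so_mx B A -> A *m B = - (B *m A^T).
Proof.
move=> soA; apply/eqP; rewrite -addr_eq0; apply/eqP/matrixP => i j.
have := soA (delta_mx 0 i) (delta_mx 0 j).
by rewrite bform_mulr bform_delta bform_delta_r -mulmxA -rowE !mxE.
Qed.

Lemma so_skew B (A : 'M[R]_n) u v :
  so_mx B A -> bform B u (v *m A) = - bform B (u *m A) v.
Proof. by move=> soA; apply/eqP; rewrite -addr_eq0 addrC soA. Qed.

Lemma omega_eq0 B (A : 'M[R]_n) :
  B \in unitmx -> (forall u v, bform B (u *m A) v = 0) -> A = 0.
Proof.
move=> Bu omega0; apply/row_matrixP => i; rewrite row0 rowE.
exact: (bform_nondeg Bu (omega0 _)).
Qed.

End BilinearForm.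

Lemma horner_mx_sumE (R : comNzRingType) n (A : 'M[R]_n.+1) (p : {poly R}) :
  horner_mx A p = \sum_(i < size p) p`_i *: A ^+ i.
Proof.
rewrite -{1}[p]coefK poly_def raddf_sum; apply: eq_bigr => i _.
change (horner_mx A (p`_i *: 'X^i) = p`_i *: A ^+ i).
by rewrite linearZ /= rmorphXn /= horner_mx_X.
Qed.

Section EigenCommutator.
Variables (R : numFieldType) (n : nat) (M A : 'M[R]_n.+1) (l : R).
Hypothesis MA : M * A - A * M = l *: A.

(* [M, _] is a derivation, so A^k is an eigenvector for the eigenvalue l k. *)
Lemma commutator_expr k : M * A ^+ k - A ^+ k * M = (l * k%:R) *: A ^+ k.
Proof.
elim: k => [|k IH]; first by rewrite !expr0 mulr1 mul1r subrr mulr0 scale0r.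
have -> : M * A ^+ k.+1 - A ^+ k.+1 * M =
    (M * A - A * M) * A ^+ k + A * (M * A ^+ k - A ^+ k * M).
  rewrite {1}exprS exprSr.
  by rewrite !mulrBl !mulrBr !mulrA -exprSr exprS ?mulrA addrA subrK.
by rewrite MA IH -scalerAl -scalerAr -exprS -scalerDl mulrSr mulrDr mulr1 addrC.
Qed.

Let S (c : nat -> R) := \sum_(i < n.+2) c i *: A ^+ i.

Lemma commutator_combination c :
  M * S c - S c * M = l *: S (fun i => i%:R * c i).
Proof.
rewrite /S mulr_sumr mulr_suml -sumrB scaler_sumr; apply: eq_bigr => i _.
by rewrite -scalerAr -scalerAl -scalerBr commutator_expr !scalerA mulrC -mulrA.
Qed.

(* Applying [M, _] j times to the Cayley-Hamilton relation multiplies the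
   coefficient of A^i by the falling factorial i^_j; for j = n+1 only the
   leading (unit) coefficient survives, whence A^(n+1) = 0. *)
Lemma eigen_commutator_nilpotent : l != 0 -> A ^+ n.+1 = 0.
Proof.
move=> l0; pose p := char_poly A.
have CH : S (fun i => p`_i) = 0.
  by rewrite -(Cayley_Hamilton A) horner_mx_sumE size_char_poly.
have CHj j : S (fun i => (i ^_ j)%:R * p`_i) = 0.
  elim: j => [|j IH].
    by rewrite -CH /S; apply: eq_bigr => i _; rewrite mul1r.
  have /eqP := commutator_combination (fun i => (i ^_ j)%:R * p`_i).
  rewrite IH mulr0 mul0r subrr eq_sym scaler_eq0 (negbTE l0) /= => /eqP Sj.
  transitivity (S (fun i => i%:R * ((i ^_ j)%:R * p`_i))
                - j%:R *: S (fun i => (i ^_ j)%:R * p`_i)).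
    rewrite /S scaler_sumr -sumrB; apply: eq_bigr => i _.
    rewrite scalerA -scalerBl ffactnSr natrM.
    case: (leqP j i) => ji; last by rewrite ffact_small // !mul0r !mulr0 subrr.
    by rewrite natrB //; congr (_ *: _); ring.
  by rewrite Sj IH scaler0 subrr.
have := CHj n.+1; rewrite /S big_ord_recr /= big1 ?add0r; last first.
  by move=> i _; rewrite ffact_small // mul0r scale0r.
have -> : p`_n.+1 = 1.
  by have /monicP := char_poly_monic A; rewrite /lead_coef size_char_poly.
move/eqP; rewrite ffactnn mulr1 scaler_eq0 pnatr_eq0 gtn_eqF ?fact_gt0 //=.
by move/eqP.
Qed.

End EigenCommutator.

Lemma commutator_eigen_nilpotent (R : numFieldType) n (M A : 'M[R]_n) l :
  M * A - A * M = l *: A -> l != 0 -> exists k, A ^+ k = 0.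
Proof.
case: n M A => [|n] M A MA l0; first by exists 0%N; apply/matrixP => -[].
by exists n.+1; apply: eigen_commutator_nilpotent MA l0.
Qed.

(* If P = z^T y - y^T z is skew, C symmetric and P C z^T = 0, then N = P C has
   N^3 = 0: indeed z C P = 0 and P C P = - P C y^T z, so N N N = 0. *)
Lemma rank2_skew_nilpotent (R : comNzRingType) n (y z : 'rV[R]_n) (C : 'M[R]_n) :
  C^T = C -> (z^T *m y - y^T *m z) *m C *m z^T = 0 ->
  let N := (z^T *m y - y^T *m z) *m C in N *m N *m N = 0.
Proof.
move=> CT; set P := _ - _ => PCz N.
have PT : P^T = - P by rewrite /P linearB /= !trmx_mul !trmxK opprB.
have zCP : z *m C *m P = 0.
  apply: trmx_inj; rewrite !trmx_mul PT CT trmx0 mulNmx mulmxA PCz.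
  by rewrite oppr0.
have PCP : P *m C *m P = - (P *m C *m y^T *m z).
  by rewrite {3}/P mulmxBr !mulmxA PCz mul0mx sub0r.
rewrite /N !mulmxA PCP !mulNmx -(mulmxA _ z) -(mulmxA _ (z *m C)) zCP.
by rewrite mulmx0 mul0mx oppr0.
Qed.

Lemma scale_regular (R : pzRingType) (a : R) (x : R^o) : a *: x = a * x.
Proof. by []. Qed.

Section DoubleExtension.
Variables (R : realType) (n m : nat).
Local Notation L := (DEA R n m).
Local Notation e := (de_e R n m).
Implicit Types (p q r : L).

Lemma DEA_eq p q :
  p.1.1.1 = q.1.1.1 -> p.1.1.2 = q.1.1.2 -> p.1.2 = q.1.2 -> p.2 = q.2 -> p = q.
Proof. by case: p => [[[? ?] ?] ?]; case: q => [[[? ?] ?] ?] /= -> -> -> ->. Qed.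

Definition g_vec (u : 'rV[R]_n) : L := (0, u, 0, 0).
Definition ebar : L := (0, 0, 1, 0).
Definition a_vec (c : 'rV[R]_m) : L := (0, 0, 0, c).

Lemma DEA_decomp q :
  q = q.1.1.1 *: e + g_vec q.1.1.2 + q.1.2 *: ebar + a_vec q.2.
Proof.
case: q => [[[x u] xb] c]; apply: DEA_eq => /=;
  by rewrite ?scale_regular ?mulr0 ?mulr1 ?scaler0 ?add0r ?addr0.
Qed.

Lemma g_vec_lin a u v : g_vec (a *: u + v) = a *: g_vec u + g_vec v.
Proof. by apply: DEA_eq => /=; rewrite ?scale_regular ?mulr0 ?scaler0 ?addr0. Qed.

Variables (B A : 'M[R]_n) (Ba : 'M[R]_m).
Local Notation br := (dbr B A).
Local Notation form := (dform B Ba).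

Lemma dbr_e_l q : br e q = 0.
Proof.
apply: DEA_eq => //=; rewrite ?mul0mx ?scale0r ?scaler0 ?subr0 //.
by rewrite /bform !mul0mx mxE.
Qed.

Lemma dbr_e_r q : br q e = 0.
Proof.
apply: DEA_eq => //=; rewrite ?mul0mx ?scale0r ?scaler0 ?subr0 //.
by rewrite /bform trmx0 !mulmx0 mxE.
Qed.

Lemma dbr_gg u v : br (g_vec u) (g_vec v) = bform B (u *m A) v *: e.
Proof.
by apply: DEA_eq => //=;
  rewrite ?scale_regular ?mulr1 ?mulr0 ?scaler0 ?scale0r ?subr0.
Qed.

Lemma dbr_bg u : br ebar (g_vec u) = g_vec (u *m A).
Proof.
apply: DEA_eq => //=; rewrite ?scale1r ?scale0r ?subr0 ?mul0mx //.
by rewrite /bform !mul0mx mxE.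
Qed.

Lemma dbr_gb u : br (g_vec u) ebar = g_vec (- (u *m A)).
Proof.
apply: DEA_eq => //=; rewrite ?scale1r ?scale0r ?sub0r //.
by rewrite /bform trmx0 !mulmx0 mxE.
Qed.

Lemma dbr_ga u c : br (g_vec u) (a_vec c) = 0.
Proof.
apply: DEA_eq => //=; rewrite ?scale0r ?subr0 //.
by rewrite /bform trmx0 !mulmx0 mxE.
Qed.

Lemma dbr_ag u c : br (a_vec c) (g_vec u) = 0.
Proof.
apply: DEA_eq => //=; rewrite ?scale0r ?subr0 //.
by rewrite /bform !mul0mx mxE.
Qed.

Lemma dform_linl w : linear_form (form ^~ w).
Proof.
move=> a u v; rewrite /dform /= !(linear_formD (bform_linl _ _)).
rewrite !(linear_formZ (bform_linl _ _)) !scale_regular; ring.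
Qed.

Lemma dform_linr w : linear_form (form w).
Proof.
move=> a u v; rewrite /dform /= !(linear_formD (bform_linr _ _)).
rewrite !(linear_formZ (bform_linr _ _)) !scale_regular; ring.
Qed.

Hypotheses (quadB : quad_mx B) (quadBa : quad_mx Ba) (soA : so_mx B A).

Lemma dform_sym p q : form p q = form q p.
Proof.
have [[BT _] [BaT _]] := (quadB, quadBa).
by rewrite /dform (bform_sym _ _ BT) (bform_sym _ _ BaT) (addrC (p.1.1.1 * _)).
Qed.

Lemma dbr_anti p q : br q p = - br p q.
Proof.
case: quadB => BT _; apply: DEA_eq => /=; rewrite ?oppr0 ?opprB //.
by rewrite (bform_sym _ _ BT) so_skew.
Qed.

Lemma dform_invariant p q r : form (br p q) r = form p (br q r).
Proof.
rewrite /dform /= (linear_form0 (bform_linl _ _)) (linear_form0 (bform_linr _ _)).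
rewrite (linear_formB (bform_linl _ _)) (linear_formB (bform_linr _ _)).
rewrite !(linear_formZ (bform_linl _ _)) !(linear_formZ (bform_linr _ _)).
rewrite !so_skew //; ring.
Qed.

Lemma dform_nondeg (d : L) : (forall q, form d q = 0) -> d = 0.
Proof.
have [[_ Bu] [_ Bau]] := (quadB, quadBa); move=> d0.
have b0 k (X : 'M[R]_k) v : bform X v 0 = 0.
  exact: linear_form0 (bform_linr _ _).
apply: DEA_eq => /=.
- by have := d0 ebar; rewrite /dform /= !b0 mulr1 mul0r !addr0.
- apply: (bform_nondeg Bu) => v; have := d0 (g_vec v).
  by rewrite /dform /= b0 mulr0 mul0r !add0r addr0.
- by have := d0 e; rewrite /dform /= !b0 mulr0 mul1r !addr0 add0r.
- apply: (bform_nondeg Bau) => v; have := d0 (a_vec v).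
  by rewrite /dform /= b0 mulr0 mul0r !add0r.
Qed.

End DoubleExtension.

Definition cocycle (R : zmodType) (V : Type) (br : V -> V -> V)
    (th : V -> V -> R) :=
  forall u v w, th (br u v) w + th (br v w) u + th (br w u) v = 0.

Section SkewDerivationCocycle.
Variables (R : realType) (V : vectType R) (br : V -> V -> V) (q : V -> V -> R).
Hypotheses (q_addl : forall a b c, q (a + b) c = q a c + q b c)
  (q_sym : forall a b, q a b = q b a)
  (q_invariant : forall a b c, q (br a b) c = q a (br b c))
  (br_anti : forall a b, br b a = - br a b).
Variable D : V -> V.
Hypotheses (derD : derivation br D) (skewD : skew_wrt q D).

Lemma skew_derivation_cocycle : cocycle br (fun u v => q (D u) v).
Proof.
have q_oppl a c : q (- a) c = - q a c.
  apply: (addrI (q a c)); rewrite -q_addl !subrr.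
  by apply: (addrI (q 0 c)); rewrite -q_addl !addr0.
have q_oppr a c : q c (- a) = - q c a by rewrite q_sym q_oppl q_sym.
have D_skew a b : q (D a) b = - q a (D b).
  by apply/eqP; rewrite -addr_eq0; apply/eqP; apply: skewD.
move=> u v w /=.
have -> : q (D (br u v)) w = - q (D (br v w)) u - q (D (br w u)) v.
  rewrite derD q_addl q_invariant D_skew q_sym; congr (_ + _).
  rewrite q_invariant br_anti q_oppr -q_invariant br_anti q_oppl opprK.
  by rewrite q_sym D_skew q_sym.
ring.
Qed.

End SkewDerivationCocycle.

Section CocycleVanishesOnE.
Variables (R : realType) (n m : nat) (B A : 'M[R]_n).
Local Notation L := (DEA R n m).
Local Notation e := (de_e R n m).
Local Notation eb := (ebar R n m).
Local Notation gv := (g_vec m).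
Local Notation av := (a_vec n).
Local Notation br := (dbr B A).
Variable th : L -> L -> R.
Hypotheses (quadB : quad_mx B) (soA : so_mx B A) (nilA : forall k, A ^+ k != 0).
Hypotheses (th_l : forall w, linear_form (th ^~ w))
  (th_r : forall w, linear_form (th w))
  (th_skew : forall u v, th u v = - th v u) (th_cocycle : cocycle br th).

(* e is central, so theta(e, _) kills all brackets. *)
Lemma th_e_bracket v w : th e (br v w) = 0.
Proof.
have := th_cocycle e v w.
rewrite dbr_e_l dbr_e_r !(linear_form0 (th_l _)) add0r addr0 => th0.
by rewrite th_skew th0 oppr0.
Qed.

Lemma th_e_e : th e e = 0.
Proof. by apply/eqP; rewrite -eqNr -th_skew. Qed.

(* Since A != 0, some bracket [u, v] = <u A, v> e is nonzero; the cocycle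
   identity on (u, v, c) then gives <u A, v> theta(e, c) = 0. *)
Lemma th_e_a c : th e (av c) = 0.
Proof.
have cocy u v : bform B (u *m A) v * th e (av c) = 0.
  have := th_cocycle (gv u) (gv v) (av c).
  rewrite dbr_gg dbr_ga dbr_ag !(linear_form0 (th_l _)) !addr0.
  by rewrite (linear_formZ (th_l _)).
apply: contraTeq (nilA 1) => thc; rewrite negbK expr1; apply/eqP.
apply: (omega_eq0 quadB.2) => u v.
by have /eqP := cocy u v; rewrite mulf_eq0 (negbTE thc) orbF => /eqP.
Qed.

Let z := \row_j th e (gv (delta_mx 0 j)).

Lemma th_e_gE w : th e (gv w) = (w *m z^T) 0 0.
Proof.
have thL : linear_form (fun w => th e (gv w)).
  by move=> a u v; rewrite g_vec_lin; apply: th_r.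
by rewrite (linear_form_coord thL) mxE; apply: eq_bigr => j _; rewrite !mxE.
Qed.

(* theta(e, [ebar, g_vec u]) = 0 means z^T is killed by A. *)
Lemma A_z : A *m z^T = 0.
Proof.
apply/matrixP => i k; rewrite (ord1 k) [RHS]mxE.
have := th_e_bracket eb (gv (delta_mx 0 i)).
by rewrite dbr_bg th_e_gE -mulmxA -rowE mxE.
Qed.

(* The cocycle identity on three vectors of g expresses theta(e, g_vec w) A B
   through a rank-2 skew matrix. *)
Lemma th_e_g_rank2 w (y := w *m A *m B) :
  th e (gv w) *: (A *m B) = z^T *m y - y^T *m z.
Proof.
have outer (p q : 'rV[R]_n) i j : (p^T *m q) i j = p 0 i * q 0 j.
  by rewrite mxE big_ord1 !mxE.
apply/matrixP => i j; rewrite mxE [RHS]mxE [X in _ + X]mxE !outer.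
have := th_cocycle (gv (delta_mx 0 i)) (gv (delta_mx 0 j)) (gv w).
have omega_ij : bform B (delta_mx 0 i *m A) (delta_mx 0 j) = (A *m B) i j.
  by rewrite bform_delta_r -mulmxA -rowE mxE.
have y_i : bform B (w *m A) (delta_mx 0 i) = y 0 i by rewrite bform_delta_r.
have y_j : bform B (delta_mx 0 j *m A) w = - y 0 j.
  by rewrite -[LHS]opprK -so_skew // (bform_sym _ _ quadB.1) bform_delta_r.
have z_k k : th e (gv (delta_mx 0 k)) = z 0 k by rewrite mxE.
rewrite !dbr_gg !(linear_formZ (th_l _)) omega_ij y_i y_j !z_k => cocy.
by rewrite -[LHS]subr0 -[X in _ - X]cocy; ring.
Qed.

(* Hence N = theta(e, g_vec w) A satisfies N^3 = 0, which forces
   theta(e, g_vec w) = 0 as A^3 != 0. *)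
Lemma th_e_g w : th e (gv w) = 0.
Proof.
set s := th e (gv w); pose y := w *m A *m B.
have CT : (invmx B)^T = invmx B by rewrite trmx_inv quadB.1.
have sA : s *: A = (z^T *m y - y^T *m z) *m invmx B.
  by rewrite -th_e_g_rank2 -scalemxAl -mulmxA mulmxV ?mulmx1 //; case: quadB.
have Nz : (z^T *m y - y^T *m z) *m invmx B *m z^T = 0.
  by rewrite -sA -scalemxAl A_z scaler0.
have := rank2_skew_nilpotent CT Nz.
rewrite /= -sA -!scalemxAl -!scalemxAr -scalemxAl !scalerA.
have -> : A *m A *m A = A ^+ 3 by rewrite !exprS expr0 mulr1 !mulmxE mulrA.
move/eqP; rewrite scaler_eq0 (negbTE (nilA 3)) orbF !mulf_eq0 !orbb.
by move/eqP.
Qed.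

Let T := \matrix_(i, j) th (gv (delta_mx 0 i)) (gv (delta_mx 0 j)).

Lemma th_ggE u v : th (gv u) (gv v) = bform T u v.
Proof.
have thL x : linear_form (fun u => th (gv u) (gv x)).
  by move=> a p q; rewrite g_vec_lin; apply: th_l.
have thR x : linear_form (fun v => th (gv x) (gv v)).
  by move=> a p q; rewrite g_vec_lin; apply: th_r.
exact: (bilinear_gram thL thR).
Qed.

(* The cocycle identity on (ebar, g, g) says A T + T A^T = - l A B with
   l = theta(e, ebar). *)
Lemma gram_commutator : A *m T + T *m A^T = - th e eb *: (A *m B).
Proof.
have T_skew u v : bform T u v = - bform T v u by rewrite -!th_ggE th_skew.
apply/matrixP => i j; rewrite mxE [RHS]mxE.
have := th_cocycle eb (gv (delta_mx 0 i)) (gv (delta_mx 0 j)).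
rewrite dbr_bg dbr_gg dbr_gb (linear_formZ (th_l _)) !th_ggE.
rewrite (linear_formN (bform_linl _ _)) (T_skew (delta_mx 0 j *m A)) opprK.
rewrite bform_mulr bform_delta !bform_delta_r -!mulmxA -!rowE !mxE => cocy.
by rewrite -[LHS]subr0 -[X in _ - X]cocy; ring.
Qed.

(* With C = B^-1 (so that C A = - A^T C), M = T C satisfies [M, A] = l A;
   as A is not nilpotent, l = theta(e, ebar) vanishes. *)
Lemma th_e_ebar : th e eb = 0.
Proof.
have [_ Bu] := quadB; set l := th e eb.
have CA : invmx B *m A = - (A^T *m invmx B).
  have -> : invmx B *m A = invmx B *m (A *m B) *m invmx B.
    by rewrite -!mulmxA mulmxV // mulmx1.
  by rewrite so_mxE // mulmxN mulNmx mulmxA mulVmx // mul1mx.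
have MA : (T *m invmx B) * A - A * (T *m invmx B) = l *: A.
  rewrite -!mulmxE -mulmxA CA mulmxN !mulmxA -opprD addrC -mulmxDl.
  rewrite gram_commutator.
  by rewrite -scalemxAl -mulmxA mulmxV // mulmx1 scaleNr opprK.
apply/eqP; apply: contraT => l0.
have [k Ak] := commutator_eigen_nilpotent MA l0.
by move: (nilA k); rewrite Ak eqxx.
Qed.

Lemma cocycle_e_vanish q : th e q = 0.
Proof.
rewrite (DEA_decomp q) !(linear_formD (th_r _)) !(linear_formZ (th_r _)).
by rewrite th_e_e th_e_g th_e_ebar th_e_a !mulr0 !addr0.
Qed.

End CocycleVanishesOnE.

Theorem mainTheorem8 (R : realType) (n m : nat)
  (B A : 'M[R]_n) (Ba : 'M[R]_m) :
  quad_mx B -> quad_mx Ba -> so_mx B A ->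
  (forall k : nat, A ^+ k != 0) ->
  (forall D : {linear DEA R n m -> DEA R n m},
     derivation (@dbr R n m B A) D ->
     skew_wrt (@dform R n m B Ba) D ->
     D (de_e R n m) = 0) /\
  (forall k : nat, (0 < k)%N -> ~ ksymplectic (@dbr R n m B A) k).
Proof.
move=> quadB quadBa soA nilA; split.
  move=> D derD skewD; apply: (dform_nondeg quadB quadBa) => q.
  have cocD : cocycle (dbr B A) (fun u v => dform B Ba (D u) v).
    apply: skew_derivation_cocycle derD skewD.
    - by move=> a b c; apply: (linear_formD (dform_linl _ _ _)).
    - exact: dform_sym.
    - exact: dform_invariant.
    - exact: dbr_anti.
  apply: (cocycle_e_vanish quadB soA nilA _ _ _ cocD).
  - by move=> w a u v; rewrite linearP; apply: dform_linl.
  - by move=> w; apply: dform_linr.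
  - move=> u v; rewrite (dform_sym quadB quadBa (D v)); apply/eqP.
    by rewrite -addr_eq0; apply/eqP; apply: skewD.
move=> k _ [_ [_ [_ [_ [_ [_ [_ [theta [thL [thR [thS [ker [thC _]]]]]]]]]]]]].
have e0 : de_e R n m = 0.
  apply: ker => i; apply: (cocycle_e_vanish quadB soA nilA _ _ (thS i) (thC i)).
    by move=> w a u v; apply: thL.
  by move=> w a u v; apply: thR.
by move: (congr1 (fun p : DEA R n m => p.1.1.1) e0) => /= /eqP; rewrite oner_eq0.
Qed.
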